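(* Let $V$, $f$, $\mathcal{A}$, $k,\tau,\eta$ be as described in the context (in particular $f$ normalized monotone submodular, $\mathcal{A}$ satisfying the $\beta$-iterative property, $\eta\ge4(\log k+1)$, $2\le\tau\le\frac{k}{3\eta(\log k+2)}$), and let $X$ and $Y$ be buckets constructed by PRo such that $Y$ is constructed at a later time than $X$. For any set $E_Y\subseteq Y$, $$f(X\cup(Y\setminus E_Y))\ge\frac{1}{1+\alpha}f(Y)\quad\text{and}\quad f(E_Y\mid X)\le\alpha f(X),$$ where $\alpha=\beta\frac{|E_Y|}{|X|}$.
   Context: Notation: $f(Y\mid X):=f(X\cup Y)-f(X)$; logarithms are to base 2. $V$ is a finite ground set, $f:2^V\to\mathbb{R}_{\ge0}$ is normalized ($f(\emptyset)=0$), monotone and submodular. A subroutine $\mathcal{A}(k',T)$ outputs an ordered set $(v_1,\dots,v_{k'})$ of elements of $T\subseteq V$; $\mathcal{A}_i(T)=\{v_1,\dots,v_i\}$; it satisfies the $\beta$-iterative property ($\beta\ge1$) if $f(\mathcal{A}_{i+1}(T))-f(\mathcal{A}_i(T))\ge\frac1\beta\max_{v\in T}f(v\mid\mathcal{A}_i(T))$ for all $T,i$. Algorithm PRo (inputs $V,k,\tau,\eta\in\mathbb{N}_+,\mathcal{A}$): $S_0\leftarrow\emptyset$; for $i=0,\dots,\lceil\log\tau\rceil$ and for $j=1,\dots,\lceil\tau/2^i\rceil$: $B_j\leftarrow\mathcal{A}(2^i\eta,V\setminus S_0)$, $S_0\leftarrow S_0\cup B_j$ (each such $B_j$ is a bucket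 of partition $i$); then $S_1\leftarrow\mathcal{A}(k-|S_0|,V\setminus S_0)$; output $S=S_0\cup S_1$. *)

From HB Require Import structures.
From mathcomp Require Import all_classical all_reals exp.
From mathcomp Require Import all_boot all_order all_algebra.
Set Implicit Arguments. Unset Strict Implicit. Unset Printing Implicit Defensive.
Import Order.TTheory GRing.Theory Num.Theory.
Local Open Scope ring_scope.

Definition log2 {R : realType} (x : R) : R := ln x / ln 2.

(* marginal gain f(Y | X) = f(X u Y) - f(X) *)
Definition marg {V : finType} {R : realType} (f : {set V} -> R) (Y X : {set V}) : R :=
  f (X :|: Y) - f X.

Definition normalized {V : finType} {R : realType} (f : {set V} -> R) :=
  f set0 = 0.
Definition nonneg_fun {V : finType} {R : realType} (f : {set V} -> R) :=
  forall S, 0 <= f S.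
Definition monotone {V : finType} {R : realType} (f : {set V} -> R) :=
  forall S T : {set V}, S \subset T -> f S <= f T.
Definition submodular {V : finType} {R : realType} (f : {set V} -> R) :=
  forall S T : {set V}, f (S :|: T) + f (S :&: T) <= f S + f T.

(* A subroutine: A k' T is an ordered set (duplicate-free sequence) *)
Definition subroutine (V : finType) := nat -> {set V} -> seq V.

Definition prefix_set {V : finType} (A : subroutine V) (k' : nat) (T : {set V}) (i : nat)
  : {set V} := [set x in take i (A k' T)].

Definition valid_subroutine {V : finType} (A : subroutine V) :=
  forall k' (T : {set V}),
    [/\ uniq (A k' T), {subset A k' T <= T} & size (A k' T) = minn k' #|T| ].

Definition beta_iterative {V : finType} {R : realType} (f : {set V} -> R) (beta : R)
  (A : subroutine V) :=
  forall k' (T : {set V}) i, (i < size (A k' T))%N ->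
    forall v, v \in T ->
      beta^-1 * marg f [set v] (prefix_set A k' T i)
        <= f (prefix_set A k' T i.+1) - f (prefix_set A k' T i).

Definition ceil_div (m d : nat) : nat := ((m + d.-1) %/ d)%N.

(* sizes of the buckets of PRo, in order of construction:
   for i = 0..ceil(log tau), for j = 1..ceil(tau/2^i), a bucket of size 2^i eta *)
Definition pro_sizes (tau eta : nat) : seq nat :=
  flatten [seq nseq (ceil_div tau (2 ^ i)) (2 ^ i * eta)%N
          | i <- iota 0 (up_log 2 tau).+1].

Fixpoint pro_buckets_from {V : finType} (A : subroutine V) (sizes : seq nat)
  (S0 : {set V}) : seq {set V} :=
  match sizes with
  | [::] => [::]
  | s :: r => let B := [set x in A s (~: S0)] in B :: pro_buckets_from A r (S0 :|: B)
  end.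

Definition pro_buckets {V : finType} (A : subroutine V) (tau eta : nat) : seq {set V} :=
  pro_buckets_from A (pro_sizes tau eta) set0.

From HB Require Import structures.
From mathcomp Require Import all_classical all_reals exp.
From mathcomp Require Import all_boot all_order all_algebra.
From mathcomp Require Import ring lra.
Set Implicit Arguments. Unset Strict Implicit. Unset Printing Implicit Defensive.
Import Order.TTheory GRing.Theory Num.Theory.
Local Open Scope ring_scope.

(** The bucket X is the output A(s, T) of the subroutine on the set T of
    elements not yet used when X was built, and every later bucket, hence
    E_Y, lies in T. Each of the |X| steps building X gained at least
    f(v | prefix)/beta >= f(v | X)/beta for every v in T, so
    f(v | X) <= beta f(X)/|X|; summing over E_Y (submodularity) gives
    f(E_Y | X) <= alpha f(X). With W = X u (Y \ E_Y) this yields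
    f(Y) <= f(W u E_Y) <= f(W) + f(E_Y | X) <= (1 + alpha) f(W). *)

Section Submodular.
Variables (V : finType) (R : realType) (f : {set V} -> R).
Hypotheses (f_mono : monotone f) (f_sub : submodular f).

Lemma marg0 (X : {set V}) : marg f set0 X = 0.
Proof. by rewrite /marg setU0 subrr. Qed.

Lemma marg_antimono (B S T : {set V}) : S \subset T -> marg f B T <= marg f B S.
Proof.
move=> ST; rewrite /marg.
have := f_sub (S :|: B) T; rewrite setUAC (setUidPr ST).
have : f S <= f ((S :|: B) :&: T) by apply: f_mono; rewrite subsetI subsetUl ST.
lra.
Qed.

Lemma marg_subadd (B C X : {set V}) : marg f (B :|: C) X <= marg f B X + marg f C X.
Proof. by have := marg_antimono C (subsetUl X B); rewrite /marg setUA; lra. Qed.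

Lemma marg_le_sum (E X : {set V}) : marg f E X <= \sum_(v in E) marg f [set v] X.
Proof.
rewrite -big_enum -[in marg f E X](set_enum E).
elim: (enum E) => [|v t IH]; first by rewrite set_nil big_nil marg0.
rewrite set_cons big_cons; apply: le_trans (marg_subadd _ _ _) _.
by rewrite lerD2l.
Qed.

Lemma f_setUD_ge (a : R) (E X Y : {set V}) :
  0 <= a -> E \subset Y -> marg f E X <= a * f X ->
  (1 + a)^-1 * f Y <= f (X :|: (Y :\: E)).
Proof.
move=> a_ge0 EY EX; set W := X :|: (Y :\: E).
have XY_WE : X :|: Y = W :|: E.
  rewrite /W -setUA; congr (_ :|: _).
  by rewrite -{1}(setID Y E) (setIidPr EY) setUC.
have EW := marg_antimono E (subsetUl X (Y :\: E)).
have fY : f Y <= f (X :|: Y) := f_mono (subsetUr X Y).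
have fXW : a * f X <= a * f W := ler_wpM2l a_ge0 (f_mono (subsetUl _ _)).
rewrite ler_pdivrMl ?ltr_wpDr // mulrDl mul1r.
move: EW EX fY; rewrite /marg XY_WE; lra.
Qed.

End Submodular.

Section IterativeSubroutine.
Variables (V : finType) (R : realType) (f : {set V} -> R) (beta : R).
Variable A : subroutine V.
Hypotheses (f0 : normalized f) (f_mono : monotone f) (f_sub : submodular f).
Hypotheses (beta_gt0 : 0 < beta) (A_iter : beta_iterative f beta A).

Lemma prefix_set0 k' (T : {set V}) : prefix_set A k' T 0 = set0.
Proof. by rewrite /prefix_set take0 set_nil. Qed.

Lemma prefix_set_sub k' (T : {set V}) i : prefix_set A k' T i \subset [set x in A k' T].
Proof. by apply/subsetP => x; rewrite !inE => /mem_take. Qed.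

Lemma prefix_set_size k' (T : {set V}) :
  prefix_set A k' T (size (A k' T)) = [set x in A k' T].
Proof. by rewrite /prefix_set take_size. Qed.

Lemma prefix_marg_bound k' (T : {set V}) v n : v \in T -> (n <= size (A k' T))%N ->
  n%:R * marg f [set v] [set x in A k' T] <= beta * f (prefix_set A k' T n).
Proof.
move=> vT; elim: n => [|n IH] n_lt; first by rewrite prefix_set0 f0 mul0r mulr0.
have := ler_wpM2l (ltW beta_gt0) (A_iter n_lt vT).
rewrite mulVKf ?gt_eqF //.
have := marg_antimono f_mono f_sub [set v] (prefix_set_sub k' T n).
have := IH (ltnW n_lt).
rewrite -natr1 mulrDl mul1r; lra.
Qed.

Lemma output_marg_bound k' (T : {set V}) v : valid_subroutine A -> v \in T ->
  #|[set x in A k' T]|%:R * marg f [set v] [set x in A k' T]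
    <= beta * f [set x in A k' T].
Proof.
move=> A_valid vT; have [A_uniq _ _] := A_valid k' T.
have := prefix_marg_bound vT (leqnn (size (A k' T))).
by rewrite prefix_set_size cardsE (card_uniqP A_uniq).
Qed.

Lemma output_marg_set_bound k' (T E : {set V}) :
  valid_subroutine A -> (0 < k')%N -> E \subset T ->
  marg f E [set x in A k' T]
    <= beta * #|E|%:R / #|[set x in A k' T]|%:R * f [set x in A k' T].
Proof.
move=> A_valid k'_gt0 ET; set X := [set x in A k' T].
have [->|[v vE]] := set_0Vmem E.
  by rewrite marg0 cards0 mulr0 !mul0r.
have X_gt0 : (0 < #|X|)%N.
  have [A_uniq _ A_size] := A_valid k' T.
  rewrite cardsE (card_uniqP A_uniq) A_size leq_min k'_gt0 /=.
  by apply/card_gt0P; exists v; apply: (subsetP ET).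
have single u : u \in E -> marg f [set u] X <= beta * f X / #|X|%:R.
  move=> uE; rewrite ler_pdivlMr ?ltr0n // mulrC.
  exact: output_marg_bound A_valid (subsetP ET u uE).
have -> : beta * #|E|%:R / #|X|%:R * f X = #|E|%:R * (beta * f X / #|X|%:R).
  by ring.
rewrite mulr_natl -sumr_const.
exact: le_trans (marg_le_sum f_mono f_sub E X) (ler_sum _ single).
Qed.

End IterativeSubroutine.

Section Buckets.
Variables (V : finType) (A : subroutine V).

Lemma size_pro_buckets_from ss (S0 : {set V}) : size (pro_buckets_from A ss S0) = size ss.
Proof. by elim: ss S0 => [|s ss IH] S0 //=; rewrite IH. Qed.

Lemma pro_buckets_from_sub ss (S0 : {set V}) q : valid_subroutine A ->
  nth set0 (pro_buckets_from A ss S0) q \subset ~: S0.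
Proof.
move=> A_valid; elim: ss S0 q => [|s ss IH] S0 [|q] /=; rewrite ?nth_nil ?sub0set //.
  by have [_ A_sub _] := A_valid s (~: S0); apply/subsetP => x; rewrite inE => /A_sub.
by apply: subset_trans (IH _ q) _; rewrite setCS subsetUl.
Qed.

Lemma nth_pro_buckets_from_lt ss (S0 : {set V}) p q : valid_subroutine A ->
  (p < q)%N -> (q < size ss)%N ->
  exists s S, [/\ s \in ss,
    nth set0 (pro_buckets_from A ss S0) p = [set x in A s (~: S)]
    & nth set0 (pro_buckets_from A ss S0) q \subset ~: S].
Proof.
move=> A_valid; elim: ss S0 p q => [|s ss IH] S0 [|p] [|q] //= pq q_lt.
  exists s, S0; split; rewrite ?mem_head //.
  by apply: subset_trans (pro_buckets_from_sub _ _ q A_valid) _; rewrite setCS subsetUl.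
have [s' [S [s'_in -> YS]]] := IH (S0 :|: [set x in A s (~: S0)]) p q pq q_lt.
by exists s', S; rewrite inE s'_in orbT.
Qed.

End Buckets.

Lemma pro_sizes_gt0 tau eta s : (0 < eta)%N -> s \in pro_sizes tau eta -> (0 < s)%N.
Proof.
move=> eta_gt0 /flattenP [t /mapP [i _ ->]]; rewrite mem_nseq => /andP [_ /eqP ->].
by rewrite muln_gt0 expn_gt0 eta_gt0.
Qed.

Theorem lemma4 (R : realType) (V : finType) (f : {set V} -> R) (beta : R)
  (A : subroutine V) (k tau eta : nat) (p q : nat) (E : {set V}) :
  normalized f -> nonneg_fun f -> monotone f -> submodular f ->
  1 <= beta -> valid_subroutine A -> beta_iterative f beta A ->
  (0 < eta)%N ->
  4 * (log2 (k%:R : R) + 1) <= eta%:R ->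
  (2 <= tau)%N ->
  (tau%:R : R) <= k%:R / (3 * eta%:R * (log2 (k%:R : R) + 2)) ->
  (p < q)%N -> (q < size (pro_buckets A tau eta))%N ->
  let X := nth set0 (pro_buckets A tau eta) p in
  let Y := nth set0 (pro_buckets A tau eta) q in
  E \subset Y ->
  let alpha := beta * #|E|%:R / #|X|%:R in
  f (X :|: (Y :\: E)) >= (1 + alpha)^-1 * f Y /\ marg f E X <= alpha * f X.
Proof.
move=> f0 _ f_mono f_sub beta_ge1 A_valid A_iter eta_gt0 _ _ _ pq q_lt X Y EY alpha.
rewrite /pro_buckets size_pro_buckets_from in q_lt.
have [s [S [s_in X_def YS]]] := nth_pro_buckets_from_lt set0 A_valid pq q_lt.
have beta_gt0 : 0 < beta := lt_le_trans ltr01 beta_ge1.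
have EX : marg f E X <= alpha * f X.
  rewrite /alpha (X_def : X = _).
  apply: output_marg_set_bound => //; first exact: pro_sizes_gt0 s_in.
  exact: subset_trans EY YS.
split=> //; apply: f_setUD_ge EY EX => //.
by rewrite /alpha divr_ge0 ?mulr_ge0 // ltW.
Qed.
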